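(* The extended Rota-Baxter algebra $(\text{Ш}_e(\mathbf{k}),\diamond,P_{\mathbf{k}})$ of weight $(\lambda,\kappa)$ is the initial object in the category of commutative extended Rota-Baxter algebras of weight $(\lambda,\kappa)$: for any commutative extended Rota-Baxter algebra $(R,P)$ of weight $(\lambda,\kappa)$ there exists a unique extended Rota-Baxter algebra homomorphism $\bar f:(\text{Ш}_e(\mathbf{k}),\diamond,P_{\mathbf{k}})\to(R,P)$.
   Context: $\mathbf{k}$ is a commutative unitary ring, $\lambda,\kappa\in\mathbf{k}$. An extended Rota-Baxter operator of weight $(\lambda,\kappa)$ on an algebra $R$ is a linear $P:R\to R$ with $P(x)P(y)=P(xP(y))+P(P(x)y)+\lambda P(xy)+\kappa xy$; homomorphisms are algebra homomorphisms commuting with the operators. $\text{Ш}_e(\mathbf{k})=\bigoplus_{n\ge0}\mathbf{k}\,\mathbf{1}^{\otimes(n+1)}$ with product $\mathbf{1}^{\otimes(m+1)}\diamond\mathbf{1}^{\otimes(n+1)}=\sum_{r=0}^{\min\{m,n\}}\sum_{i=0}^{r}\binom{m+n-r}{m}\binom{m}{r}\binom{r}{i}\lambda^{r-i}\kappa^i\mathbf{1}^{\otimes(m+n+1-r-i)}$, and $P_{\mathbf{k}}(\mathbf{1}^{\otimes n})=\mathbf{1}^{\otimes (n+1)}$. This is the free commutative extended Rota-Baxter algebra of weight $(\lambda,\kappa)$ on $\mathbf{k}$. *)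

From HB Require Import structures.
From mathcomp Require Import all_boot all_order all_algebra.
Set Implicit Arguments. Unset Strict Implicit. Unset Printing Implicit Defensive.
Import GRing.Theory.
Local Open Scope ring_scope.

(* Ш_e(k) = ⊕_{n>=0} k 1^{⊗(n+1)} is represented by the free k-module
   {poly k}: the basis element 1^{⊗(n+1)} is encoded by 'X^n.
   The (polynomial) ring structure of {poly k} is NOT used as the algebra
   structure; only its k-module structure is.  The product of Ш_e(k) is
   [sha_mul] below, and its unit is 1^{⊗1} = 'X^0 = 1. *)

Section ShaE.
Variables (k : comNzRingType) (lambda kappa : k).

Definition sha_basis_mul (m n : nat) : {poly k} :=
  \sum_(r < (minn m n).+1) \sum_(i < r.+1)
     (('C(m + n - r, m) * 'C(m, r) * 'C(r, i))%:R
        * lambda ^+ (r - i) * kappa ^+ i) *: 'X^(m + n - r - i).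

Definition sha_mul (p q : {poly k}) : {poly k} :=
  \sum_(i < size p) \sum_(j < size q) (p`_i * q`_j) *: sha_basis_mul i j.

(* P_k (1^{⊗ n}) = 1^{⊗(n+1)}, i.e. 'X^(n-1) |-> 'X^n, extended linearly *)
Definition sha_P (p : {poly k}) : {poly k} := p * 'X.

Definition is_ext_RB_operator (R : comAlgType k) (P : R -> R) : Prop :=
  linear P /\
  forall x y : R,
    P x * P y = P (x * P y) + P (P x * y) + lambda *: P (x * y) + kappa *: (x * y).

Definition is_ext_RB_hom_from_sha (R : comAlgType k) (P : R -> R)
    (f : {poly k} -> R) : Prop :=
  [/\ linear f,
      f 1 = 1,
      (forall p q, f (sha_mul p q) = f p * f q)
    & (forall p, f (sha_P p) = P (f p))].

End ShaE.

(* A homomorphism (Ш_e(k), ⋄, P_k) -> (R, P)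
   must send the unit 'X^0 to 1 and commute with the operators, so it sends
   'X^n to P^n(1); being linear, it is determined by these values.  For
   existence, take the linear map f : 'X^n |-> P^n(1).  Writing the product
   formula as
     'X^m ⋄ 'X^n = \sum_r 'C(m+n-r, m) 'C(m, r) 'X^(m-r) 'X^(n-r) (λ'X + κ)^r,
   a Pascal-type recurrence for the coefficients gives
     'X^(m+1) ⋄ 'X^(n+1) = 'X ('X^m ⋄ 'X^(n+1)) + 'X ('X^(m+1) ⋄ 'X^n)
                           + (λ'X + κ) ('X^m ⋄ 'X^n),
   which f maps to the Rota-Baxter identity for x = P^m(1), y = P^n(1).
   Hence f ('X^m ⋄ 'X^n) = P^m(1) P^n(1) by induction, and f is
   multiplicative by bilinearity. *)

From HB Require Import structures.
From mathcomp Require Import all_boot all_order all_algebra.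
From mathcomp Require Import ring zify.
Set Implicit Arguments. Unset Strict Implicit. Unset Printing Implicit Defensive.
Import GRing.Theory.
Local Open Scope ring_scope.

Definition sha_coef (m n r : nat) : nat := 'C(m + n - r, m) * 'C(m, r).

Lemma sha_coef_small_l m n r : (m < r)%N -> sha_coef m n r = 0%N.
Proof. by move=> ltmr; rewrite /sha_coef (@bin_small m r) // muln0. Qed.

Lemma sha_coef_small_r m n r : (n < r)%N -> sha_coef m n r = 0%N.
Proof.
move=> ltnr; have [ltm|lem] := ltnP (m + n - r) m.
  by rewrite /sha_coef bin_small.
by rewrite sha_coef_small_l //; lia.
Qed.

Lemma sha_coefS0 m n :
  sha_coef m.+1 n.+1 0 = (sha_coef m n.+1 0 + sha_coef m.+1 n 0)%N.
Proof. by rewrite /sha_coef !bin0 !muln1 !subn0 addSn addnS binS addnC. Qed.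

Lemma sha_coefS m n r :
  sha_coef m.+1 n.+1 r.+1 =
    (sha_coef m n.+1 r.+1 + sha_coef m.+1 n r.+1 + sha_coef m n r)%N.
Proof.
have [lerm|ltmr] := leqP r m; last first.
  by rewrite !sha_coef_small_l //; lia.
rewrite /sha_coef.
have -> : (m.+1 + n.+1 - r.+1 = (m + n - r).+1)%N by lia.
have -> : (m + n.+1 - r.+1 = m + n - r)%N by lia.
have -> : (m.+1 + n - r.+1 = m + n - r)%N by lia.
rewrite binS [in RHS]binS binS; ring.
Qed.

Lemma sum_ord_trunc (V : nmodType) (M N : nat) (F : nat -> V) :
  (M <= N)%N -> (forall r, (M <= r)%N -> F r = 0) ->
  \sum_(r < N) F r = \sum_(r < M) F r.
Proof.
move=> leMN F0; rewrite -!(big_mkord xpredT) (@big_cat_nat _ _ _ M) //=.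
rewrite [X in _ + X]big1_seq ?addr0 // => r /andP[_].
by rewrite mem_index_iota => /andP[/F0].
Qed.

Section ShaProduct.
Variables (k : comNzRingType) (lambda kappa : k).

Definition sha_weight : {poly k} := lambda *: 'X + kappa%:P.

Definition sha_term (m n r : nat) : {poly k} :=
  (sha_coef m n r)%:R *: ('X^(m - r) * 'X^(n - r) * sha_weight ^+ r).

Definition sha_prod (m n : nat) : {poly k} := \sum_(r < m.+1) sha_term m n r.

Lemma sha_term_small_l m n r : (m < r)%N -> sha_term m n r = 0.
Proof. by move=> ltmr; rewrite /sha_term sha_coef_small_l // scale0r. Qed.

Lemma sha_term_small_r m n r : (n < r)%N -> sha_term m n r = 0.
Proof. by move=> ltnr; rewrite /sha_term sha_coef_small_r // scale0r. Qed.

Lemma sha_prod_widen N m n : (m < N)%N -> \sum_(r < N) sha_term m n r = sha_prod m n.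
Proof. by move=> ltmN; apply: sum_ord_trunc => // r; apply: sha_term_small_l. Qed.

Lemma sha_prod0n n : sha_prod 0 n = 'X^n.
Proof.
by rewrite /sha_prod big_ord1 /sha_term /sha_coef !subn0 bin0 binn scale1r mul1r mulr1.
Qed.

Lemma sha_prodm0 m : sha_prod m 0 = 'X^m.
Proof.
rewrite /sha_prod (@sum_ord_trunc _ 1) // => [|r]; last exact: sha_term_small_r.
by rewrite big_ord1 /sha_term /sha_coef !subn0 addn0 bin0 binn scale1r !mulr1.
Qed.

Lemma mulX_sha_term_l m n r :
  'X * sha_term m n.+1 r.+1 =
    (sha_coef m n.+1 r.+1)%:R *: ('X^(m - r) * 'X^(n - r) * sha_weight ^+ r.+1).
Proof.
have [ltrm|lemr] := ltnP r m; last first.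
  by rewrite sha_term_small_l ?sha_coef_small_l ?scale0r ?mulr0 //; lia.
have -> : (m - r = (m - r.+1).+1)%N by lia.
by rewrite /sha_term subSS [in RHS]exprS -!mul_polyC; ring.
Qed.

Lemma mulX_sha_term_r m n r :
  'X * sha_term m.+1 n r.+1 =
    (sha_coef m.+1 n r.+1)%:R *: ('X^(m - r) * 'X^(n - r) * sha_weight ^+ r.+1).
Proof.
have [ltrn|lenr] := ltnP r n; last first.
  by rewrite sha_term_small_r ?sha_coef_small_r ?scale0r ?mulr0 //; lia.
have -> : (n - r = (n - r.+1).+1)%N by lia.
by rewrite /sha_term subSS [in RHS]exprS -!mul_polyC; ring.
Qed.

Lemma sha_termS0 m n :
  sha_term m.+1 n.+1 0 = 'X * sha_term m n.+1 0 + 'X * sha_term m.+1 n 0.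
Proof.
by rewrite /sha_term !subn0 sha_coefS0 natrD -!mul_polyC rmorphD /= !exprS; ring.
Qed.

Lemma sha_termS m n r :
  sha_term m.+1 n.+1 r.+1 =
    'X * sha_term m n.+1 r.+1 + 'X * sha_term m.+1 n r.+1 + sha_weight * sha_term m n r.
Proof.
rewrite mulX_sha_term_l mulX_sha_term_r /sha_term !subSS sha_coefS !natrD !scalerDl.
by congr (_ + _); rewrite exprS -!mul_polyC; ring.
Qed.

Lemma sha_prodS m n :
  sha_prod m.+1 n.+1 =
    'X * sha_prod m n.+1 + 'X * sha_prod m.+1 n + sha_weight * sha_prod m n.
Proof.
rewrite -(@sha_prod_widen m.+2 m n.+1) // /sha_prod big_ord_recl sha_termS0.
under eq_bigr => i _ do rewrite sha_termS.
rewrite !big_split /= -!mulr_sumr !(big_ord_recl m.+1) /= !mulrDr; ring.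
Qed.

Lemma sha_basis_mulE m n : sha_basis_mul lambda kappa m n = sha_prod m n.
Proof.
rewrite /sha_prod (@sum_ord_trunc _ (minn m n).+1) ?ltnS ?geq_minl //; last first.
  move=> r; rewrite ltnNge leq_min negb_and -!ltnNge.
  by case/orP; [apply: sha_term_small_l | apply: sha_term_small_r].
rewrite /sha_basis_mul; apply: eq_bigr => -[r /=].
rewrite ltnS leq_min => /andP[lerm lern] _.
rewrite /sha_term /sha_weight exprDn mulr_sumr scaler_sumr.
apply: eq_bigr => -[i /= ltir] _.
have -> : (m + n - r - i = (m - r) + (n - r) + (r - i))%N by lia.
rewrite !exprD exprZn -!mul_polyC -mulr_natr /sha_coef !natrM !rmorphM /=.
rewrite !rmorph_nat !rmorphXn /=; ring.
Qed.

End ShaProduct.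

Lemma poly_linear_eq (k : comNzRingType) (V : lmodType k) (f g : {poly k} -> V) :
  linear f -> linear g -> (forall n, f 'X^n = g 'X^n) -> f =1 g.
Proof.
move=> f_linear g_linear fgX p.
pose F : {linear {poly k} -> V} := HB.pack f (GRing.isLinear.Build _ _ _ _ f f_linear).
pose G : {linear {poly k} -> V} := HB.pack g (GRing.isLinear.Build _ _ _ _ g g_linear).
rewrite -[p]coefK poly_def -[f _]/(F _) -[g _]/(G _) !linear_sum.
by apply: eq_bigr => i _; rewrite !linearZ /= fgX.
Qed.

Section ShaEval.
Variables (k : comNzRingType) (lambda kappa : k) (R : comAlgType k) (P : R -> R).

Definition sha_eval (p : {poly k}) : R := \sum_(i < size p) p`_i *: iter i P 1.

Lemma sha_eval_widen N (p : {poly k}) :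
  (size p <= N)%N -> sha_eval p = \sum_(i < N) p`_i *: iter i P 1.
Proof.
move=> le_pN; symmetry.
apply: (sum_ord_trunc (F := fun i => p`_i *: iter i P 1)) => // i le_pi.
by rewrite nth_default ?scale0r.
Qed.

Lemma sha_eval_linear : linear sha_eval.
Proof.
move=> a p q; set N := maxn (size p) (size q).
have le_pN : (size p <= N)%N by apply: leq_maxl.
have le_qN : (size q <= N)%N by apply: leq_maxr.
have le_sN : (size (a *: p + q)%R <= N)%N.
  rewrite (leq_trans (size_polyD _ _)) // geq_max le_qN andbT.
  exact: leq_trans (size_scale_leq _ _) le_pN.
rewrite (sha_eval_widen le_sN) (sha_eval_widen le_pN) (sha_eval_widen le_qN).
rewrite scaler_sumr -big_split.
by apply: eq_bigr => i _; rewrite coefD coefZ scalerDl scalerA.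
Qed.

HB.instance Definition _ :=
  GRing.isLinear.Build k {poly k} R *:%R sha_eval sha_eval_linear.

Lemma sha_evalXn n : sha_eval 'X^n = iter n P 1.
Proof.
rewrite /sha_eval size_polyXn big_ord_recr /= coefXn eqxx scale1r big1 ?add0r //.
by move=> i _; rewrite coefXn /= ltn_eqF ?scale0r.
Qed.

Hypothesis P_RB : is_ext_RB_operator lambda kappa P.

Lemma sha_evalMX p : sha_eval (p * 'X) = P (sha_eval p).
Proof.
have [PZ PD] := GRing.semilinear_linear (proj1 P_RB).
apply: (@poly_linear_eq _ _ (fun p => sha_eval (p * 'X)) (P \o sha_eval))
  => [a q r|a q r|n] /=.
- by rewrite mulrDl -scalerAl linearP.
- by rewrite linearP PD PZ.
- by rewrite -exprSr !sha_evalXn.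
Qed.

Lemma sha_eval_prod m n :
  sha_eval (sha_prod lambda kappa m n) = iter m P 1 * iter n P 1.
Proof.
elim: m n => [|m IHm] n; first by rewrite sha_prod0n sha_evalXn mul1r.
elim: n => [|n IHn]; first by rewrite sha_prodm0 sha_evalXn mulr1.
have weightM B : sha_weight lambda kappa * B = lambda *: (B * 'X) + kappa *: B.
  by rewrite mulrDl -scalerAl mul_polyC mulrC.
rewrite sha_prodS weightM ![('X * _)]mulrC !linearD !linearZ /= !sha_evalMX !IHm IHn.
by rewrite !iterS (proj2 P_RB) -!addrA.
Qed.

Lemma sha_eval_mul p q :
  sha_eval (sha_mul lambda kappa p q) = sha_eval p * sha_eval q.
Proof.
rewrite /sha_mul linear_sum [sha_eval p]/sha_eval [sha_eval q]/sha_eval mulr_suml.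
apply: eq_bigr => i _.
rewrite linear_sum mulr_sumr; apply: eq_bigr => j _.
by rewrite linearZ sha_basis_mulE /= sha_eval_prod -scalerAl -scalerAr scalerA.
Qed.

Lemma sha_eval_is_hom : is_ext_RB_hom_from_sha lambda kappa P sha_eval.
Proof.
split; [exact: sha_eval_linear | | exact: sha_eval_mul | exact: sha_evalMX].
by rewrite -(expr0 'X) sha_evalXn.
Qed.

End ShaEval.

Lemma ext_RB_hom_from_shaXn (k : comNzRingType) (lambda kappa : k)
    (R : comAlgType k) (P : R -> R) (g : {poly k} -> R) n :
  is_ext_RB_hom_from_sha lambda kappa P g -> g 'X^n = iter n P 1.
Proof.
case=> _ g1 _ gP; elim: n => [|n IHn]; first by rewrite expr0 g1.
by rewrite exprSr -/(sha_P _) gP IHn.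
Qed.

Theorem corollary3p5 (k : comNzRingType) (lambda kappa : k)
    (R : comAlgType k) (P : R -> R) :
  is_ext_RB_operator lambda kappa P ->
  exists f : {poly k} -> R,
    is_ext_RB_hom_from_sha lambda kappa P f /\
    (forall g : {poly k} -> R,
        is_ext_RB_hom_from_sha lambda kappa P g -> forall x, g x = f x).
Proof.
move=> P_RB; exists (sha_eval P); split; first exact: sha_eval_is_hom.
move=> g g_hom; have [g_linear _ _ _] := g_hom.
apply: poly_linear_eq => // [|n]; first exact: sha_eval_linear.
by rewrite (ext_RB_hom_from_shaXn n g_hom) sha_evalXn.
Qed.
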